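(* Let $A$ and $B$ be $k$-algebras with a twisting map $\tau\colon B\otimes A\to A\otimes B$, and endow $A$ and $B$ with their cofinite topologies. If $\tau\colon B\otimes^! A\to A\otimes^! B$ is continuous, then its continuous dual, viewed via the isomorphisms $(A\otimes^!B)^\circ\cong A^\circ\otimes B^\circ$ and $(B\otimes^!A)^\circ\cong B^\circ\otimes A^\circ$ as a map \[\tau^\circ\colon A^\circ\otimes B^\circ\to B^\circ\otimes A^\circ,\] is a cotwisting map for the coalgebras $A^\circ$ and $B^\circ$, and the continuous dual of the homeomorphism $A\otimes^! B\to A\otimes_\tau B$ (identity on the underlying space) yields an isomorphism of coalgebras \[(A\otimes_\tau B)^\circ\xrightarrow{\sim} A^\circ\otimes^{\tau^\circ}B^\circ.\]
   Context: $k$ is a field (discrete topology); algebras are unital associative, coalgebras counital coassociative. For an algebra $R$, the cofinite topology is the linear topology whose open subspaces are those containing a two-sided ideal of finite codimension; $R^\circ$ denotes the finite dual coalgebra $\{\phi\in R^*:\ker\phi$ contains an ideal of finite codimension$\}$ (equivalently the space of functionals continuous for the cofinite topology), with comultiplication induced by the dual of multiplication and counit $\phi\mapsto\phi(1)$. For linearly topologized spaces $E,F$, $E\otimes^!F$ is $E\otimes F$ with the linear topology whose open subspaces are those containing $E_0\otimes F+E\otimes F_0$ for some open subspaces $E_0,F_0$; the continuous dual is $E^\circ=\mathrm{Top}_k(E,k)$. A linear map $\tau\colon B\otimes A\to A\otimes B$ is a twisting map if $m_\tau=(m_A\otimes m_B)\circ(\mathrm{id}_A\otimes\tau\otimes\mathrm{id}_B)$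 is an associative multiplication on $A\otimes B$ with identity $1_A\otimes1_B$; this algebra is $A\otimes_\tau B$. For coalgebras $C,D$, a linear map $\phi\colon C\otimes D\to D\otimes C$ is a cotwisting map if $\Delta_\phi=(\mathrm{id}_C\otimes\phi\otimes\mathrm{id}_D)\circ(\Delta_C\otimes\Delta_D)$ is a coassociative comultiplication on $C\otimes D$ with counit $\varepsilon_C\otimes\varepsilon_D$; this coalgebra is the cotwisted tensor product $C\otimes^\phi D$. *)

From HB Require Import structures.
From mathcomp Require Import all_boot all_order all_algebra.
From mathcomp Require Import boolp classical_sets functions.
From Stdlib Require Import ClassicalEpsilon.
From Stdlib Require List.
Set Implicit Arguments. Unset Strict Implicit. Unset Printing Implicit Defensive.
Import GRing.Theory.
Local Open Scope ring_scope.

(* Tensors.  An element of the n-fold tensor power (V (x) W)^{(x) n} is       *)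
(* represented by a finite list of elementary tensors, each elementary tensor *)
(* (v1 (x) w1) (x) ... (x) (vn (x) wn) being a list [:: (v1,w1); ...].        *)
(* Two representations are equal as tensors (tensn_eq) iff they agree under   *)
(* all products of linear functionals (over a field these separate points of  *)
(* a tensor product).  Scalars are absorbed in the first factor.              *)

Section Tensors.
Variable k : fieldType.

Definition lfun (V : lmodType k) (f : V -> k) : Prop :=
  forall (c : k) (x y : V), f (c *: x + y) = c * f x + f y.

Definition bilin (V W : lmodType k) (F : V -> W -> k) : Prop :=
  (forall w, lfun (fun v => F v w)) /\ (forall v, lfun (F v)).

Variables V W : lmodType k.

Definition tensn_val (l : nat -> V -> k) (m : nat -> W -> k)
    (X : seq (seq (V * W)%type)) : k :=
  \sum_(x <- X) \prod_(j <- zip (iota 0 (size x)) x)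
      (l j.1 j.2.1 * m j.1 j.2.2).

Definition tensn_eq (X Y : seq (seq (V * W)%type)) : Prop :=
  forall (l : nat -> V -> k) (m : nat -> W -> k),
    (forall i, lfun (l i)) -> (forall i, lfun (m i)) ->
    tensn_val l m X = tensn_val l m Y.

Definition tens_eq (X Y : seq (V * W)%type) : Prop :=
  tensn_eq (map (fun p => [:: p]) X) (map (fun p => [:: p]) Y).

Definition tscale (c : k) (X : seq (V * W)%type) : seq (V * W)%type :=
  map (fun p => (c *: p.1, p.2)) X.

Definition tsub (X Y : seq (V * W)%type) : seq (V * W)%type := X ++ tscale (-1) Y.

Definition tspan (s : seq (seq (V * W)%type)) (c : nat -> k) : seq (V * W)%type :=
  flatten [seq tscale (c i) (nth [::] s i) | i <- iota 0 (size s)].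

Definition tsubspace (U : seq (V * W)%type -> Prop) : Prop :=
  [/\ U [::], (forall X Y, U X -> U Y -> U (X ++ Y)),
      (forall c X, U X -> U (tscale c X)) &
      (forall X Y, tens_eq X Y -> U X -> U Y)].

(* value of a bilinear form (= linear functional on V (x) W) on a tensor *)
Definition tform (F : V -> W -> k) (X : seq (V * W)%type) : k :=
  \sum_(p <- X) F p.1 p.2.

End Tensors.

Section Cofinite.
Variable k : fieldType.

Definition subspace (V : lmodType k) (U : V -> Prop) : Prop :=
  U 0 /\ forall (c : k) x y, U x -> U y -> U (c *: x + y).

Definition fincodim (V : lmodType k) (U : V -> Prop) : Prop :=
  exists s : seq V, forall x, exists c : nat -> k,
    U (x - \sum_(i < size s) c i *: s`_i).

Variable A : algType k.

Definition ideal (I : A -> Prop) : Prop :=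
  subspace I /\ forall a x, I x -> I (a * x) /\ I (x * a).

Definition cof_open (U : A -> Prop) : Prop :=
  subspace U /\
  exists I, [/\ ideal I, fincodim I & forall x, I x -> U x].

(* the finite dual A° : functionals continuous for the cofinite topology *)
Definition finite_dual (phi : A -> k^o) : Prop :=
  lfun phi /\
  exists I, [/\ ideal I, fincodim I & forall x, I x -> phi x = 0].

(* the comultiplication of A° : a chosen representative of Delta(phi) in
   A° (x) A°, characterized by  sum phi'(a) phi''(a') = phi(a a') *)
Definition fd_comul (phi : A -> k^o) : seq ((A -> k^o) * (A -> k^o))%type :=
  epsilon (inhabits [::]) (fun s =>
    (forall p, List.In p s -> finite_dual p.1 /\ finite_dual p.2) /\
    forall a a', \sum_(p <- s) p.1 a * p.2 a' = phi (a * a')).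

End Cofinite.

Section Tensor_bang.
Variable k : fieldType.
Variables A B : algType k.

(* open subspaces of A (x)^! B, A and B with their cofinite topologies *)
Definition tbang_open (U : seq (A * B)%type -> Prop) : Prop :=
  tsubspace U /\
  exists A0 B0, [/\ cof_open A0, cof_open B0,
      (forall a b, A0 a -> U [:: (a, b)]) &
      (forall a b, B0 b -> U [:: (a, b)])].

End Tensor_bang.

Section Twisting.
Variable k : fieldType.
Variables A B : algType k.

(* A linear map tau : B (x) A -> A (x) B is given (universal property) by a
   map  t : B -> A -> A (x) B  bilinear up to tensor equality. *)
Definition tau_bilin (t : B -> A -> seq (A * B)%type) : Prop :=
  (forall (c : k) b b' a,
      tens_eq (t (c *: b + b') a) (tscale c (t b a) ++ t b' a)) /\
  (forall (c : k) b a a',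
      tens_eq (t b (c *: a + a')) (tscale c (t b a) ++ t b a')).

Definition tau_ext (t : B -> A -> seq (A * B)%type) (X : seq (B * A)%type) :=
  flatten [seq t p.1 p.2 | p <- X].

(* m_tau = (m_A (x) m_B) o (id (x) tau (x) id) *)
Definition mtau (t : B -> A -> seq (A * B)%type) (X Y : seq (A * B)%type) :=
  flatten [seq flatten [seq [seq (x.1 * q.1, q.2 * y.2) | q <- t x.2 y.1]
                          | y <- Y] | x <- X].

Definition twisting_map (t : B -> A -> seq (A * B)%type) : Prop :=
  [/\ tau_bilin t,
      (forall X Y Z, tens_eq (mtau t (mtau t X Y) Z) (mtau t X (mtau t Y Z))),
      (forall X, tens_eq (mtau t [:: (1, 1)] X) X) &
      (forall X, tens_eq (mtau t X [:: (1, 1)]) X)].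

Definition tau_continuous (t : B -> A -> seq (A * B)%type) : Prop :=
  forall U, tbang_open U -> tbang_open (fun X => U (tau_ext t X)).

(* finite dual of the algebra A (x)_tau B; functionals on A (x) B are
   bilinear forms on A x B *)
Definition tideal (t : B -> A -> seq (A * B)%type) (I : seq (A * B)%type -> Prop) :=
  tsubspace I /\ forall X Y, I Y -> I (mtau t X Y) /\ I (mtau t Y X).

Definition tfincodim (I : seq (A * B)%type -> Prop) : Prop :=
  exists s : seq (seq (A * B)%type), forall X, exists c : nat -> k,
    I (tsub X (tspan s c)).

Definition twisted_finite_dual (t : B -> A -> seq (A * B)%type)
    (F : A -> B -> k^o) : Prop :=
  bilin F /\
  exists I, [/\ tideal t I, tfincodim I & forall X, I X -> tform F X = 0].

Definition twisted_comul_rep (t : B -> A -> seq (A * B)%type) (F : A -> B -> k^o)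
    (s : seq ((A -> B -> k^o) * (A -> B -> k^o))%type) : Prop :=
  (forall p, List.In p s -> twisted_finite_dual t p.1 /\ twisted_finite_dual t p.2)
  /\ forall X Y, \sum_(p <- s) tform p.1 X * tform p.2 Y =
                 tform F (mtau t X Y).

End Twisting.

Section Cotwisting.
Variable k : fieldType.
Variables A B : algType k.
Local Notation CA := (A -> k^o).
Local Notation CB := (B -> k^o).

Definition in_CD (Z : seq (CA * CB)%type) : Prop :=
  forall z, List.In z Z -> finite_dual z.1 /\ finite_dual z.2.

(* the bilinear form on A x B induced by an element of A° (x) B°, i.e. the
   standard map A° (x) B° -> (A (x)^! B)° *)
Definition cd_form (Z : seq (CA * CB)%type) : A -> B -> k^o :=
  fun a b => \sum_(z <- Z) z.1 a * z.2 b.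

(* tauo : A° (x) B° -> B° (x) A° (linear, given on elementary tensors) is the
   continuous dual of tau, read through (X (x)^! Y)° = X° (x) Y° *)
Definition is_dual_of (t : B -> A -> seq (A * B)%type)
    (tauo : CA -> CB -> seq (CB * CA)%type) : Prop :=
  forall phi psi, finite_dual phi -> finite_dual psi ->
  forall b a, \sum_(r <- tauo phi psi) r.1 b * r.2 a =
              \sum_(q <- t b a) phi q.1 * psi q.2.

(* Delta_phi = (id (x) phi (x) id) o (Delta_C (x) Delta_D), C = A°, D = B° *)
Definition cotw_comul (tauo : CA -> CB -> seq (CB * CA)%type) (Z : seq (CA * CB)%type)
    : seq (seq (CA * CB)%type) :=
  flatten [seq flatten [seq flatten [seq
     [seq [:: (p.1, r.1); (r.2, q.2)] | r <- tauo p.2 q.1]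
     | q <- fd_comul z.2] | p <- fd_comul z.1] | z <- Z].

Definition cd_counit (z : CA * CB) : k := z.1 1 * z.2 1.

Definition cotwisting_map (tauo : CA -> CB -> seq (CB * CA)%type) : Prop :=
  [/\
      (forall phi psi, finite_dual phi -> finite_dual psi ->
         forall r, List.In r (tauo phi psi) -> finite_dual r.1 /\ finite_dual r.2),
      (forall (c : k) phi phi' psi,
         finite_dual phi -> finite_dual phi' -> finite_dual psi ->
         tens_eq (tauo (c *: phi + phi') psi)
                 (tscale c (tauo phi psi) ++ tauo phi' psi)),
      (forall (c : k) phi psi psi',
         finite_dual phi -> finite_dual psi -> finite_dual psi' ->
         tens_eq (tauo phi (c *: psi + psi'))
                 (tscale c (tauo phi psi) ++ tauo phi psi')),
      (* coassociativity of Delta_tauo *)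
      (forall Z, in_CD Z ->
         tensn_eq
           (flatten [seq [seq w ++ behead x | w <- cotw_comul tauo (take 1 x)]
                    | x <- cotw_comul tauo Z])
           (flatten [seq [seq take 1 x ++ w | w <- cotw_comul tauo (behead x)]
                    | x <- cotw_comul tauo Z])) &
      (* counit eps_C (x) eps_D *)
      (forall Z, in_CD Z ->
         tens_eq [seq (cd_counit (nth (0, 0) w 0) *: (nth (0, 0) w 1).1,
                       (nth (0, 0) w 1).2) | w <- cotw_comul tauo Z] Z /\
         tens_eq [seq (cd_counit (nth (0, 0) w 1) *: (nth (0, 0) w 0).1,
                       (nth (0, 0) w 0).2) | w <- cotw_comul tauo Z] Z)].

Definition cd_rep (F : A -> B -> k^o) (Z : seq (CA * CB)%type) : Prop :=
  in_CD Z /\ forall a b, cd_form Z a b = F a b.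

Definition dual_id_coalg_iso (t : B -> A -> seq (A * B)%type)
    (tauo : CA -> CB -> seq (CB * CA)%type) : Prop :=
  [/\
      (forall F, twisted_finite_dual t F -> exists Z, cd_rep F Z),
      (forall Z, in_CD Z -> twisted_finite_dual t (cd_form Z)),
      (forall Z Z', in_CD Z -> in_CD Z' ->
         (forall a b, cd_form Z a b = cd_form Z' a b) -> tens_eq Z Z'),
      (* compatible with comultiplications *)
      (forall F Z (s : seq (((A -> B -> k^o) * (A -> B -> k^o)) *
                           (seq (CA * CB) * seq (CA * CB)))%type),
         twisted_finite_dual t F -> cd_rep F Z ->
         twisted_comul_rep t F (map fst s) ->
         (forall j, List.In j s -> cd_rep j.1.1 j.2.1 /\ cd_rep j.1.2 j.2.2) ->
         tensn_eq (flatten [seq [seq [:: x; y] | x <- j.2.1, y <- j.2.2]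
                           | j <- s])
                  (cotw_comul tauo Z)) &
      (forall F Z, twisted_finite_dual t F -> cd_rep F Z ->
         \sum_(z <- Z) cd_counit z = F 1 1)].

End Cotwisting.

From HB Require Import structures.
From mathcomp Require Import all_boot all_order all_algebra.
From mathcomp Require Import boolp classical_sets functions.
From Stdlib Require Import ClassicalEpsilon Classical.
From Stdlib Require List.
From mathcomp Require Import ring.
Set Implicit Arguments. Unset Strict Implicit. Unset Printing Implicit Defensive.
Import GRing.Theory.
Local Open Scope ring_scope.

(* Over a field, tensors are compared through the values of products of linear
   functionals, and a tensor in A° ⊗ B° through its values at points of A × B,
   so every identity below is an identity between scalar sums.  The main tool
   is a factorisation: a bilinear form on A × B vanishing whenever one argument
   lies in a cofinite ideal is a finite sum of products phi(a) psi(b) with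
   phi ∈ A°, psi ∈ B°.  Applied to (b, a) ↦ <phi ⊗ psi, τ(b ⊗ a)>, which
   vanishes on cofinite ideals because τ is continuous, it defines τ°; applied
   to (a, a') ↦ phi(a a') it gives the comultiplication of A°.  Unwinding the
   definitions, <Δ(Z), x ⊗ y> = <Z, m_τ(x ⊗ y)>, so coassociativity and
   counitality of Δ are dual to associativity and unitality of m_τ.  The same
   identity shows that Z ∈ A° ⊗ B° kills the ideal {X | <Z, U X V> = 0 for all
   U, V} of A ⊗_τ B, which is cut out by finitely many functionals and hence is
   cofinite.  Conversely a functional on A ⊗_τ B killing a cofinite ideal I
   kills the cofinite ideals {a | a ⊗ 1 ∈ I} and {b | 1 ⊗ b ∈ I} of A and B, so
   the factorisation writes it as an element of A° ⊗ B°. *)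

Lemma In_flatten_map (I T : Type) (F : I -> seq T) (s : seq I) (x : T) :
  List.In x (flatten [seq F y | y <- s]) <-> exists2 y, List.In y s & List.In x (F y).
Proof.
rewrite List.in_concat; split=> [[_ [/List.in_map_iff [y [<- sy]] xF]] | [y sy xF]].
  by exists y.
by exists (F y); split=> //; apply/List.in_map_iff; exists y.
Qed.

Lemma eq_big_In (R : Type) (idx : R) (op : R -> R -> R) (I : Type) (s : seq I)
    (F G : I -> R) :
  (forall x, List.In x s -> F x = G x) ->
  \big[op/idx]_(x <- s) F x = \big[op/idx]_(x <- s) G x.
Proof.
elim: s => [|y s IH] FG; first by rewrite !big_nil.
by rewrite !big_cons FG /=; [rewrite IH // => x sx; apply: FG; right | left].
Qed.

Lemma big1_In (R : Type) (idx : R) (op : Monoid.law idx) (I : Type) (s : seq I)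
    (F : I -> R) :
  (forall x, List.In x s -> F x = idx) -> \big[op/idx]_(x <- s) F x = idx.
Proof. by move=> F1; rewrite (@eq_big_In _ _ _ _ _ _ (fun _ => idx)) ?big1. Qed.

Section LinearFunctional.
Variables (k : fieldType) (V : lmodType k) (f : V -> k).
Hypothesis f_lin : lfun f.

Lemma lfun0 : f 0 = 0.
Proof.
have := f_lin 1 0 0; rewrite scaler0 addr0 mul1r => f0.
by apply: (addrI (f 0)); rewrite addr0 -f0.
Qed.

Lemma lfunD x y : f (x + y) = f x + f y.
Proof. by have := f_lin 1 x y; rewrite scale1r mul1r. Qed.

Lemma lfunZ c x : f (c *: x) = c * f x.
Proof. by have := f_lin c x 0; rewrite !addr0 lfun0 addr0. Qed.

Lemma lfunB x y : f (x - y) = f x - f y.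
Proof. by rewrite lfunD -scaleN1r lfunZ mulN1r. Qed.

Lemma lfun_sum (I : Type) (r : seq I) (P : pred I) (F : I -> V) :
  f (\sum_(i <- r | P i) F i) = \sum_(i <- r | P i) f (F i).
Proof. exact: (big_morph f lfunD lfun0). Qed.

End LinearFunctional.

Lemma lfun_mull (k : fieldType) (R : algType k) (x : R) (l : R -> k) :
  lfun l -> lfun (fun a => l (x * a)).
Proof. by move=> l_lin c a b; rewrite mulrDr -scalerAr l_lin. Qed.

Lemma lfun_mulr (k : fieldType) (R : algType k) (y : R) (l : R -> k) :
  lfun l -> lfun (fun a => l (a * y)).
Proof. by move=> l_lin c a b; rewrite mulrDl -scalerAl l_lin. Qed.

Lemma scaler_fctE (k : fieldType) (T : Type) (c : k) (f : T -> k^o) (x : T) :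
  (c *: f) x = c * f x.
Proof. by []. Qed.

Section TensorValue.
Variables (k : fieldType) (V W : lmodType k).
Implicit Types (X Y : seq (V * W)%type) (l : V -> k) (m : W -> k).

Definition tens_val l m X : k := \sum_(p <- X) l p.1 * m p.2.

Lemma tensn_val_seq1 (L : nat -> V -> k) (M : nat -> W -> k) X :
  tensn_val L M [seq [:: p] | p <- X] = tens_val (L 0%N) (M 0%N) X.
Proof.
rewrite /tensn_val /tens_val big_map; apply: eq_bigr => p _.
by rewrite /= big_cons big_nil mulr1.
Qed.

Lemma tens_eqP X Y :
  tens_eq X Y <-> (forall l m, lfun l -> lfun m -> tens_val l m X = tens_val l m Y).
Proof.
split=> [XY l m l_lin m_lin | XY L M L_lin M_lin]; last by rewrite !tensn_val_seq1 XY.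
have := XY (fun _ => l) (fun _ => m) (fun _ => l_lin) (fun _ => m_lin).
by rewrite !tensn_val_seq1.
Qed.

Lemma tens_eq_sym X Y : tens_eq X Y -> tens_eq Y X.
Proof. by move/tens_eqP=> XY; apply/tens_eqP=> l m l_lin m_lin; rewrite XY. Qed.

Lemma tens_val_nil l m : tens_val l m [::] = 0.
Proof. by rewrite /tens_val big_nil. Qed.

Lemma tens_val_cons l m p X : tens_val l m (p :: X) = l p.1 * m p.2 + tens_val l m X.
Proof. by rewrite /tens_val big_cons. Qed.

Lemma tens_val_cat l m X Y : tens_val l m (X ++ Y) = tens_val l m X + tens_val l m Y.
Proof. by rewrite /tens_val big_cat. Qed.

Lemma tens_val_scale l m c X : lfun l -> tens_val l m (tscale c X) = c * tens_val l m X.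
Proof.
move=> l_lin; rewrite /tens_val /tscale big_map mulr_sumr; apply: eq_bigr => p _.
by rewrite /= (lfunZ l_lin) mulrA.
Qed.

Lemma tens_val_tsub l m X Y :
  lfun l -> tens_val l m (tsub X Y) = tens_val l m X - tens_val l m Y.
Proof. by move=> l_lin; rewrite /tsub tens_val_cat tens_val_scale // mulN1r. Qed.

Lemma tens_val_tspan l m s c : lfun l ->
  tens_val l m (tspan s c) = \sum_(i < size s) c i * tens_val l m (nth [::] s i).
Proof.
move=> l_lin; rewrite /tspan /tens_val big_flatten /= big_map.
rewrite -(big_mkord xpredT (fun i => c i * tens_val l m (nth [::] s i))).
by rewrite /index_iota subn0; apply: eq_bigr => i _; rewrite -tens_val_scale.
Qed.

Lemma tens_eq_seq1_linl (w : W) (c : k) (x y : V) :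
  tens_eq [:: (c *: x + y, w)] (tscale c [:: (x, w)] ++ [:: (y, w)]).
Proof.
apply/tens_eqP => l m l_lin m_lin.
by rewrite tens_val_cat tens_val_scale // !tens_val_cons !tens_val_nil l_lin; ring.
Qed.

Lemma tens_eq_seq1_linr (v : V) (c : k) (x y : W) :
  tens_eq [:: (v, c *: x + y)] (tscale c [:: (v, x)] ++ [:: (v, y)]).
Proof.
apply/tens_eqP => l m l_lin m_lin.
by rewrite tens_val_cat tens_val_scale // !tens_val_cons !tens_val_nil m_lin; ring.
Qed.

End TensorValue.

Lemma tens_val_map (k : fieldType) (V W V' W' : lmodType k) (f : V' -> V) (g : W' -> W)
    (l : V -> k) (m : W -> k) (X : seq (V' * W')%type) :
  tens_val l m [seq (f q.1, g q.2) | q <- X] = tens_val (l \o f) (m \o g) X.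
Proof. by rewrite /tens_val big_map. Qed.

(** * Subspaces of finite codimension *)

Section FiniteCodimension.
Variable k : fieldType.

Definition coef_cons (l : k) (c : nat -> k) : nat -> k :=
  fun i => if i is j.+1 then c j else l.

Lemma fincodim_mono (V : lmodType k) (J J' : V -> Prop) :
  (forall x, J x -> J' x) -> fincodim J -> fincodim J'.
Proof. by move=> JJ' [s Hs]; exists s => x; have [c Hc] := Hs x; exists c; apply: JJ'. Qed.

Lemma fincodimT (V : lmodType k) : fincodim (fun _ : V => True).
Proof. by exists [::] => x; exists (fun _ => 0). Qed.

(* [R] is the graph of a linear map [V -> k^m] (only the first [m] entries of
   [c] matter in [R x c]); its kernel meets [U] in a cofinite subspace. *)
Lemma fincodim_ker (V : lmodType k) (m : nat) (U : V -> Prop)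
    (R : V -> (nat -> k) -> Prop) :
  subspace U -> fincodim U ->
  (forall x, exists c, R x c) ->
  (forall a x y c d, R x c -> R y d -> R (a *: x + y) (fun i => a * c i + d i)) ->
  (forall x c d, R x c -> (forall i, (i < m)%N -> c i = d i) -> R x d) ->
  fincodim (fun x => U x /\ R x (fun _ => 0)).
Proof.
elim: m U R => [|m IH] U R sU fU Rtot Rlin Rtr.
  case: fU => s Hs; exists s => x; have [c Hc] := Hs x; exists c; split => //.
  by have [d Hd] := Rtot (x - \sum_(i < size s) c i *: s`_i); apply: Rtr Hd _.
have Rext x c d : R x c -> (forall i, c i = d i) -> R x d.
  by move=> Rxc cd; apply: Rtr Rxc _ => i _; apply: cd.
pose R' x c := exists l, R x (coef_cons l c).
have F' : fincodim (fun x => U x /\ R' x (fun _ => 0)).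
  apply: IH => //.
  - move=> x; have [c Hc] := Rtot x; exists (fun i => c i.+1), (c 0%N).
    by apply: Rext Hc _; case.
  - move=> a x y c d [l Hl] [l' Hl']; exists (a * l + l').
    by apply: Rext (Rlin _ _ _ _ _ Hl Hl') _; case.
  - move=> x c d [l Hl] cd; exists l; apply: Rtr Hl _; case => //= i Hi; exact: cd.
(* Either coordinate [0] vanishes on [U] wherever the others do, or one such
   [x0] with nonzero coordinate [0] is added to the spanning family. *)
have [[x0 [l0 [Ux0 Rx0 l0_neq0]]] | no_x0] :=
  classic (exists x0 l0, [/\ U x0, R x0 (coef_cons l0 (fun _ => 0)) & l0 != 0]).
  have [s' Hs'] := F'; exists (x0 :: s') => x; have [c [Ux1 [mu Rx1]]] := Hs' x.
  set x1 := x - _ in Ux1 Rx1.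
  exists (coef_cons (mu / l0) c).
  have -> : x - \sum_(i < size (x0 :: s')) coef_cons (mu / l0) c i *: (x0 :: s')`_i
          = (- (mu / l0)) *: x0 + x1.
    rewrite /= big_ord_recl /= /x1 scaleNr opprD addrCA.
    by congr (_ + (_ - _)); apply: eq_bigr.
  split; first exact: sU.2.
  apply: Rext (Rlin _ _ _ _ _ Rx0 Rx1) _; case => /= [|_].
    by rewrite mulNr divfK // addNr.
  by rewrite mulr0 addr0.
apply: fincodim_mono F' => x [Ux [l Rl]]; split => //.
have l0 : l = 0.
  by apply: contra_notP no_x0 => l_neq0; exists x, l; split => //; apply/eqP.
by apply: Rext Rl _; case => //=; rewrite l0.
Qed.

Lemma fincodimI (V : lmodType k) (U I : V -> Prop) :
  subspace U -> subspace I -> fincodim U -> fincodim I ->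
  fincodim (fun x => U x /\ I x).
Proof.
move=> sU [I0 sI] fU [s Hs].
pose R x c := I (x - \sum_(i < size s) c i *: s`_i).
case: (@fincodim_ker V (size s) U R sU fU Hs).
- move=> a x y c d Rx Ry; rewrite /R.
  have -> : a *: x + y - \sum_(i < size s) (a * c i + d i) *: s`_i =
            a *: (x - \sum_(i < size s) c i *: s`_i) + (y - \sum_(i < size s) d i *: s`_i).
    under eq_bigr => i _ do rewrite scalerDl -scalerA.
    by rewrite big_split /= scalerBr scaler_sumr opprD !addrA; congr (_ - _); rewrite addrAC.
  exact: sI.
- by move=> x c d Rx cd; rewrite /R; under eq_bigr => i _ do rewrite -cd //.
move=> s' Hs'; exists s' => x; have [c [Ux Rx]] := Hs' x; exists c; split => //.
have sum0 : \sum_(i < size s) (0 : k) *: s`_i = 0 by apply: big1 => i _; exact: scale0r.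
by move: Rx; rewrite /R sum0 subr0.
Qed.

Lemma ideal_subspace (A : algType k) (I : A -> Prop) : ideal I -> subspace I.
Proof. by case. Qed.

Lemma idealI (A : algType k) (I I' : A -> Prop) :
  ideal I -> ideal I' -> ideal (fun x => I x /\ I' x).
Proof.
move=> [[I0 sI] mI] [[I0' sI'] mI']; split; first split => //.
  by move=> c x y [? ?] [? ?]; split; [apply: sI | apply: sI'].
by move=> a x [Ix Ix']; have [? ?] := mI a x Ix; have [? ?] := mI' a x Ix'.
Qed.

Lemma finite_dual_lin (A : algType k) (c : k) (phi phi' : A -> k^o) :
  finite_dual phi -> finite_dual phi' -> finite_dual (c *: phi + phi').
Proof.
move=> [lp [I [iI fI vI]]] [lp' [I' [iI' fI' vI']]]; split.
  move=> a x y; change (c * phi (a *: x + y) + phi' (a *: x + y) =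
                        a * (c * phi x + phi' x) + (c * phi y + phi' y)).
  rewrite lp lp'; ring.
exists (fun x => I x /\ I' x); split.
- exact: idealI.
- by apply: fincodimI => //; apply: ideal_subspace.
- move=> x [Ix Ix']; change (c * phi x + phi' x = 0).
  by rewrite vI // vI' // mulr0 addr0.
Qed.

End FiniteCodimension.

(** * Factorisation of bilinear forms *)

Section BilinearDecomposition.
Variables (k : fieldType) (V W : lmodType k) (PV : V -> Prop) (PW : W -> Prop).

Definition lincomb (g : seq (W -> k)) (c : nat -> k) (w : W) : k :=
  \sum_(i < size g) c i * nth (fun _ => 0) g i w.

Lemma lincombD g c d w :
  lincomb g (fun i => c i + d i) w = lincomb g c w + lincomb g d w.
Proof. by rewrite /lincomb -big_split; apply: eq_bigr => i _; rewrite mulrDl. Qed.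

Lemma lincombZ g a c w : lincomb g (fun i => a * c i) w = a * lincomb g c w.
Proof. by rewrite /lincomb mulr_sumr; apply: eq_bigr => i _; rewrite mulrA. Qed.

Lemma lincombB g c d w :
  lincomb g (fun i => c i - d i) w = lincomb g c w - lincomb g d w.
Proof. by rewrite /lincomb -sumrB; apply: eq_bigr => i _; rewrite mulrBl. Qed.

Lemma lincomb0 g w : lincomb g (fun _ => 0) w = 0.
Proof. by rewrite /lincomb big1 // => i _; rewrite mul0r. Qed.

Lemma lincomb_cons g0 g c w :
  lincomb (g0 :: g) c w = c 0%N * g0 w + lincomb g (fun i => c i.+1) w.
Proof. by rewrite /lincomb /= big_ord_recl. Qed.

(* When [G v0] lies outside the span of [g], the coefficient of [G v0] in
   [G v] is well defined, hence linear in [v]. *)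
Lemma lincomb_coeff (g : seq (W -> k)) (G : V -> W -> k) (v0 : V) :
  (forall w, lfun (fun v => G v w)) -> (forall v, PV v -> forall w, G v w = 0) ->
  ~ (exists c, forall w, G v0 w = lincomb g c w) ->
  (forall v, exists l e, forall w, G v w = l * G v0 w + lincomb g e w) ->
  exists lam : V -> k, [/\ lfun lam, (forall v, PV v -> lam v = 0) &
    forall v, exists e, forall w, G v w = lam v * G v0 w + lincomb g e w].
Proof.
move=> G_linl G_PV v0_free G_span.
have coeff_uniq l l' e e' :
    (forall w, l * G v0 w + lincomb g e w = l' * G v0 w + lincomb g e' w) -> l = l'.
  move=> E; have [// | neq] := eqVneq l l'; case: v0_free.
  exists (fun i => (e' i - e i) / (l - l')) => w.
  have -> : lincomb g (fun i => (e' i - e i) / (l - l')) w =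
            (lincomb g e' w - lincomb g e w) / (l - l').
    by rewrite -lincombB /lincomb mulr_suml; apply: eq_bigr => i _; rewrite mulrAC.
  have -> : lincomb g e' w - lincomb g e w = (l - l') * G v0 w.
    have -> : lincomb g e' w = l * G v0 w + lincomb g e w - l' * G v0 w.
      by rewrite E; ring.
    ring.
  by field; rewrite subr_eq0.
pose P v l := exists e, forall w, G v w = l * G v0 w + lincomb g e w.
pose lam v := epsilon (inhabits 0) (P v).
have lamP v : P v (lam v).
  by apply: epsilon_spec; have [l [e He]] := G_span v; exists l, e.
have lamE v l : P v l -> lam v = l.
  move=> [e He]; have [e' He'] := lamP v.
  by apply: (coeff_uniq _ _ e' e) => w; rewrite -He -He'.
exists lam; split => // [a x y | v PVv].
  apply: lamE; have [e He] := lamP x; have [e' He'] := lamP y.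
  exists (fun i => a * e i + e' i) => w.
  rewrite (G_linl w a x y) He He' lincombD lincombZ; ring.
apply: lamE; exists (fun _ => 0) => w.
by rewrite G_PV // lincomb0 mul0r addr0.
Qed.

Lemma bilin_decomp (g : seq (W -> k)) (G : V -> W -> k) :
  (forall w, lfun (fun v => G v w)) -> (forall v, lfun (G v)) ->
  (forall v, PV v -> forall w, G v w = 0) -> (forall w, PW w -> forall v, G v w = 0) ->
  (forall v, exists c, forall w, G v w = lincomb g c w) ->
  exists s : seq ((V -> k) * (W -> k)),
    (forall p, List.In p s -> [/\ lfun p.1, (forall v, PV v -> p.1 v = 0),
                                  lfun p.2 & (forall w, PW w -> p.2 w = 0)]) /\
    forall v w, G v w = \sum_(p <- s) p.1 v * p.2 w.
Proof.
elim: g G => [|g0 g IH] G G_linl G_linr G_PV G_PW G_span.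
  exists [::]; split => // v w; have [c Hc] := G_span v.
  by rewrite Hc /lincomb big_ord0 big_nil.
have [G_span' | /not_all_ex_not [v0 v0_free]] :=
  classic (forall v, exists c, forall w, G v w = lincomb g c w).
  exact: IH.
have [d Hd] := G_span v0.
have d0_neq0 : d 0%N != 0.
  apply/negP => /eqP d0; apply: v0_free; exists (fun i => d i.+1) => w.
  by rewrite Hd lincomb_cons d0 mul0r add0r.
have [lam [lam_lin lam_PV lamE]] : exists lam : V -> k,
    [/\ lfun lam, (forall v, PV v -> lam v = 0) &
      forall v, exists e, forall w, G v w = lam v * G v0 w + lincomb g e w].
  apply: lincomb_coeff => // v.
  have [c Hc] := G_span v.
  exists (c 0%N / d 0%N), (fun i => c i.+1 - (c 0%N / d 0%N) * d i.+1) => w.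
  by rewrite Hc Hd !lincomb_cons lincombB lincombZ; field.
pose G' v w := G v w - lam v * G v0 w.
have [|v a x y|v PVv w|w PWw v|v|s [s_ok G'E]] := IH G'.
- by move=> w a x y; rewrite /G' (G_linl w a x y) lam_lin; ring.
- by rewrite /G' (G_linr v a x y) (G_linr v0 a x y); ring.
- by rewrite /G' G_PV // lam_PV // mul0r subr0.
- by rewrite /G' !G_PW // mulr0 subr0.
- by have [e He] := lamE v; exists e => w; rewrite /G' He; ring.
exists ((lam, G v0) :: s); split => [p /= [<- | sp] | v w]; last 1 first.
- by rewrite big_cons /= -G'E /G'; ring.
- by split => //= w PWw; exact: G_PW.
- exact: s_ok.
Qed.

End BilinearDecomposition.

Lemma finite_dual_bilin_decomp (k : fieldType) (A B : algType k) (G : A -> B -> k)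
    (IA : A -> Prop) (IB : B -> Prop) :
  ideal IA -> fincodim IA -> ideal IB -> fincodim IB ->
  (forall b, lfun (fun a => G a b)) -> (forall a, lfun (G a)) ->
  (forall a, IA a -> forall b, G a b = 0) -> (forall b, IB b -> forall a, G a b = 0) ->
  exists s : seq ((A -> k^o) * (B -> k^o)),
    (forall p, List.In p s -> finite_dual p.1 /\ finite_dual p.2) /\
    forall a b, G a b = \sum_(p <- s) p.1 a * p.2 b.
Proof.
move=> iA fA iB fB G_linl G_linr G_IA G_IB; have [sA HsA] := fA.
have [a|s [s_ok sE]] := bilin_decomp (g := map G sA) G_linl G_linr G_IA G_IB.
  have [c Hc] := HsA a; exists c => b.
  have := G_IA _ Hc b; rewrite (lfunB (G_linl b)) (lfun_sum (G_linl b)).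
  move/eqP; rewrite subr_eq0 => /eqP ->; rewrite /lincomb size_map.
  by apply: eq_bigr => i _; rewrite (lfunZ (G_linl b)) (nth_map 0).
exists s; split => // p sp; have [l1 v1 l2 v2] := s_ok p sp.
by split; split => //; [exists IA | exists IB].
Qed.

Lemma fd_comul_spec (k : fieldType) (A : algType k) (phi : A -> k^o) : finite_dual phi ->
  (forall p, List.In p (fd_comul phi) -> finite_dual p.1 /\ finite_dual p.2) /\
  forall a a', \sum_(p <- fd_comul phi) p.1 a * p.2 a' = phi (a * a').
Proof.
move=> [phi_lin [I [iI fI phiI]]].
apply: (epsilon_spec _ (fun s : seq ((A -> k^o) * (A -> k^o)) =>
  (forall p, List.In p s -> finite_dual p.1 /\ finite_dual p.2) /\
  forall a a', \sum_(p <- s) p.1 a * p.2 a' = phi (a * a'))).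
have [||a Ia b|b Ib a|s [s_ok sE]] :=
  finite_dual_bilin_decomp (G := fun a a' => phi (a * a')) iI fI iI fI.
- by move=> b; apply: lfun_mulr.
- by move=> a; apply: lfun_mull.
- by apply: phiI; have [_ /(_ b a Ia) []] := iI.
- by apply: phiI; have [_ /(_ a b Ib) []] := iI.
by exists s; split => // a a'; rewrite sE.
Qed.

(** * Tensors of functions are determined by their values *)

Section PointEvaluation.
(* Points [a0], [b0] are needed: for empty [A] the hypothesis of [tensn_inj]
   would be vacuous. *)
Variables (k : fieldType) (A B : Type) (a0 : A) (b0 : B).
Local Notation CA := (A -> k^o).
Local Notation CB := (B -> k^o).

(* Equality of functions on [A * B] is equality of tensors in [CA (x) CB]:
   apply [m] to the functions of [b], then [l] to the functions of [a]. *)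
Lemma tens_sum_pointwise (I : Type) (X Y : seq I) (c : I -> k) (f : I -> CA) (g : I -> CB) :
  (forall a b, \sum_(x <- X) c x * (f x a * g x b) = \sum_(x <- Y) c x * (f x a * g x b)) ->
  forall l m, lfun l -> lfun m ->
  \sum_(x <- X) c x * (l (f x) * m (g x)) = \sum_(x <- Y) c x * (l (f x) * m (g x)).
Proof.
move=> XY l m l_lin m_lin.
have XYm a : \sum_(x <- X) c x * (f x a * m (g x)) = \sum_(x <- Y) c x * (f x a * m (g x)).
  have E : \sum_(x <- X) (c x * f x a) *: g x = \sum_(x <- Y) (c x * f x a) *: g x.
    apply: funext => b; rewrite !fct_sumE.
    transitivity (\sum_(x <- X) c x * (f x a * g x b)).
      by apply: eq_bigr => x _; rewrite mulrA.
    by rewrite XY; apply: eq_bigr => x _; rewrite mulrA.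
  move/(congr1 m): E; rewrite !(lfun_sum m_lin).
  under eq_bigr => x _ do rewrite (lfunZ m_lin) -mulrA.
  by under [RHS]eq_bigr => x _ do rewrite (lfunZ m_lin) -mulrA.
have E : \sum_(x <- X) (c x * m (g x)) *: f x = \sum_(x <- Y) (c x * m (g x)) *: f x.
  apply: funext => a; rewrite !fct_sumE.
  transitivity (\sum_(x <- X) c x * (f x a * m (g x))).
    by apply: eq_bigr => x _; rewrite [f x a * _]mulrC mulrA.
  by rewrite XYm; apply: eq_bigr => x _; rewrite [f x a * _]mulrC mulrA.
move/(congr1 l): E; rewrite !(lfun_sum l_lin).
under eq_bigr => x _ do rewrite (lfunZ l_lin) -mulrA [m _ * _]mulrC.
by under [RHS]eq_bigr => x _ do rewrite (lfunZ l_lin) -mulrA [m _ * _]mulrC.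
Qed.

Local Notation nth0 x i := (nth (0, 0) x i).

Definition tensn_term n (L : nat -> CA -> k) (M : nat -> CB -> k) (x : seq (CA * CB)%type) :=
  \prod_(i < n) (L i (nth0 x i).1 * M i (nth0 x i).2).

Lemma tensn_val_term n L M (X : seq (seq (CA * CB)%type)) :
  all (fun x => size x == n) X -> tensn_val L M X = \sum_(x <- X) tensn_term n L M x.
Proof.
have zipE (x : seq (CA * CB)%type) m :
    \prod_(j <- zip (iota m (size x)) x) (L j.1 j.2.1 * M j.1 j.2.2) =
    \prod_(i < size x) (L (m + i)%N (nth0 x i).1 * M (m + i)%N (nth0 x i).2).
  elim: x m => [|y x IH] m; first by rewrite big_nil big_ord0.
  rewrite /= big_cons big_ord_recl /= addn0 IH; congr (_ * _).
  by apply: eq_bigr => i _; rewrite addSnnS.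
rewrite /tensn_val; elim: X => [|x X IH]; first by rewrite !big_nil.
by move=> /= /andP [/eqP sx HX]; rewrite !big_cons IH // -sx (zipE x 0).
Qed.

Section Injectivity.
Variables (n : nat) (X Y : seq (seq (CA * CB)%type)).

Definition tensn_agree_from N := forall (pa : nat -> A) (pb : nat -> B) L M,
  (forall i, lfun (L i)) -> (forall i, lfun (M i)) ->
  (forall i, (N <= i)%N -> L i = (fun f : CA => f (pa i)) /\ M i = (fun g : CB => g (pb i))) ->
  \sum_(x <- X) tensn_term n L M x = \sum_(x <- Y) tensn_term n L M x.

Lemma tensn_agree_fromS N : (N < n)%N -> tensn_agree_from N -> tensn_agree_from N.+1.
Proof.
move=> ltNn agreeN pa pb L M L_lin M_lin LM_eval.
pose c x := \prod_(i < n | i != Ordinal ltNn) (L i (nth0 x i).1 * M i (nth0 x i).2).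
have termE L' M' : (forall i, i != N -> L' i = L i /\ M' i = M i) ->
    forall x, tensn_term n L' M' x = c x * (L' N (nth0 x N).1 * M' N (nth0 x N).2).
  move=> LL' x; rewrite /tensn_term (bigD1 (Ordinal ltNn)) //= mulrC; congr (_ * _).
  apply: eq_bigr => i neq_iN.
  have neq : (i : nat) != N by apply: contra neq_iN => /eqP eq; apply/eqP/val_inj.
  by have [-> ->] := LL' i neq.
rewrite !(eq_bigr _ (fun x _ => termE L M (fun _ _ => conj erefl erefl) x)).
apply: (tens_sum_pointwise (f := fun x => (nth0 x N).1) (g := fun x => (nth0 x N).2)) => //.
move=> a b; pose La := [eta L with N |-> fun f : CA => f a].
pose Mb := [eta M with N |-> fun g : CB => g b].
have LaMb i : i != N -> La i = L i /\ Mb i = M i.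
  by move=> /negbTE neq; rewrite /La /Mb /= neq.
have := agreeN [eta pa with N |-> a] [eta pb with N |-> b] La Mb.
rewrite !(eq_bigr _ (fun x _ => termE La Mb LaMb x)) /La /Mb /= eqxx.
apply=> [i | i | i le_Ni] /=; case: eqP => // neq.
by apply: LM_eval; rewrite ltn_neqAle le_Ni andbT eq_sym; apply/eqP.
Qed.

Lemma tensn_inj : all (fun x => size x == n) X -> all (fun x => size x == n) Y ->
  (forall (pa : nat -> A) (pb : nat -> B),
     tensn_val (fun i (f : CA) => f (pa i)) (fun i (g : CB) => g (pb i)) X =
     tensn_val (fun i (f : CA) => f (pa i)) (fun i (g : CB) => g (pb i)) Y) ->
  tensn_eq X Y.
Proof.
move=> sX sY XY.
have agree0 : tensn_agree_from 0.
  move=> pa pb L M _ _ LM_eval.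
  have -> : L = (fun i (f : CA) => f (pa i)) by apply: funext => i; case: (LM_eval i).
  have -> : M = (fun i (g : CB) => g (pb i)) by apply: funext => i; case: (LM_eval i).
  by rewrite -!tensn_val_term.
have agree N : (N <= n)%N -> tensn_agree_from N.
  by elim: N => // N IH ltNn; apply: tensn_agree_fromS => //; apply/IH/ltnW.
move=> l m l_lin m_lin.
pose L i := if (i < n)%N then l i else (fun f : CA => f a0).
pose M i := if (i < n)%N then m i else (fun g : CB => g b0).
have LME x : tensn_term n L M x = tensn_term n l m x.
  by apply: eq_bigr => i _; rewrite /L /M ltn_ord.
rewrite (tensn_val_term _ _ sX) (tensn_val_term _ _ sY) -!(eq_bigr _ (fun x _ => LME x)).
apply: (agree n (leqnn n) (fun _ => a0) (fun _ => b0)) => i.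
- by rewrite /L; case: ifP.
- by rewrite /M; case: ifP.
- by rewrite /L /M ltnNge => ->.
Qed.

End Injectivity.

Lemma tens_eq_pointwise (Z Z' : seq (CA * CB)%type) :
  (forall a b, \sum_(z <- Z) z.1 a * z.2 b = \sum_(z <- Z') z.1 a * z.2 b) -> tens_eq Z Z'.
Proof.
move=> ZZ'; apply: (tensn_inj (n := 1)) => [||pa pb].
- by apply/List.forallb_forall => x /List.in_map_iff [y [<-]].
- by apply/List.forallb_forall => x /List.in_map_iff [y [<-]].
by rewrite !tensn_val_seq1; exact: ZZ'.
Qed.

End PointEvaluation.

Section TensorFunctionals.
Variables (k : fieldType) (V W : lmodType k).
Local Notation tensor := (seq (V * W)%type).

Definition tens_lin (F : tensor -> k) : Prop :=
  [/\ F [::] = 0, (forall X Y, F (X ++ Y) = F X + F Y),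
      (forall c X, F (tscale c X) = c * F X) &
      (forall X Y, tens_eq X Y -> F X = F Y)].

Lemma tens_lin_val (l : V -> k) (m : W -> k) : lfun l -> lfun m -> tens_lin (tens_val l m).
Proof.
move=> l_lin m_lin; split => [|X Y|c X|X Y /tens_eqP -> //].
- exact: tens_val_nil.
- exact: tens_val_cat.
- exact: tens_val_scale.
Qed.

Lemma tens_lin_sum (I : Type) (r : seq I) (F : I -> tensor -> k) :
  (forall i, List.In i r -> tens_lin (F i)) -> tens_lin (fun X => \sum_(i <- r) F i X).
Proof.
move=> F_lin; split => [|X Y|c X|X Y XY].
- by rewrite big1_In // => i ri; case: (F_lin i ri).
- rewrite -big_split; apply: eq_big_In => i ri; by case: (F_lin i ri).
- rewrite mulr_sumr; apply: eq_big_In => i ri; by case: (F_lin i ri).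
- by apply: eq_big_In => i ri; case: (F_lin i ri) => _ _ _; apply.
Qed.

Lemma tens_linZ (c : k) (F : tensor -> k) : tens_lin F -> tens_lin (fun X => c * F X).
Proof.
case=> F0 FD FZ Feq; split => [|X Y|a X|X Y XY].
- by rewrite F0 mulr0.
- by rewrite FD mulrDr.
- by rewrite FZ mulrCA.
- by rewrite (Feq _ _ XY).
Qed.

Lemma tsubspace_ker (F : tensor -> k) : tens_lin F -> tsubspace (fun X => F X = 0).
Proof.
case=> F0 FD FZ Feq; split => [//|X Y FX FY|c X FX|X Y XY FX].
- by rewrite FD FX FY addr0.
- by rewrite FZ FX mulr0.
- by rewrite -(Feq _ _ XY).
Qed.

Lemma tsubspace_bigcap (J : Type) (U : J -> tensor -> Prop) :
  (forall j, tsubspace (U j)) -> tsubspace (fun X => forall j, U j X).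
Proof.
move=> sU; split => [j|X Y UX UY j|c X UX j|X Y XY UX j]; case: (sU j) => U0 UD UZ Ueq.
- exact: U0.
- exact: UD.
- exact: UZ.
- exact: Ueq (UX j).
Qed.

Lemma tens_val_ker_fincodim (E : seq ((V -> k) * (W -> k))) :
  (forall e, List.In e E -> lfun e.1 /\ lfun e.2) ->
  exists S : seq tensor, forall X, exists c : nat -> k,
    forall e, List.In e E -> tens_val e.1 e.2 (tsub X (tspan S c)) = 0.
Proof.
elim: E => [|e0 E IH] E_lin; first by exists [::] => X; exists (fun _ => 0).
have [e0_lin _] := E_lin e0 (or_introl erefl).
have [S' HS'] := IH (fun e eE => E_lin e (or_intror eE)).
have [[X0 [X0_ker X0_val]] | no_X0] := classic (exists X0,
    (forall e, List.In e E -> tens_val e.1 e.2 X0 = 0) /\ tens_val e0.1 e0.2 X0 != 0).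
  exists (X0 :: S') => X; have [c Hc] := HS' X.
  pose mu := tens_val e0.1 e0.2 (tsub X (tspan S' c)) / tens_val e0.1 e0.2 X0.
  exists (coef_cons mu c) => e eE; have [e_lin _] := E_lin e eE.
  have -> : tens_val e.1 e.2 (tsub X (tspan (X0 :: S') (coef_cons mu c))) =
            tens_val e.1 e.2 (tsub X (tspan S' c)) - mu * tens_val e.1 e.2 X0.
    rewrite !tens_val_tsub // !tens_val_tspan // /= big_ord_recl /=.
    by rewrite opprD addrA addrAC.
  case: eE => [<- | eE]; first by rewrite /mu divfK // subrr.
  by rewrite Hc // X0_ker // mulr0 subr0.
exists S' => X; have [c Hc] := HS' X; exists c => e [<- | eE]; last exact: Hc.
apply: contra_notP no_X0 => /eqP val_neq0.
by exists (tsub X (tspan S' c)).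
Qed.

End TensorFunctionals.

Section AlgebraTensors.
Variables (k : fieldType) (A B : algType k).

Lemma tbang_open_tens_val_ker (phi : A -> k^o) (psi : B -> k^o) :
  finite_dual phi -> finite_dual psi -> tbang_open (fun X => tens_val phi psi X = 0).
Proof.
move=> [phi_lin [I [iI fI phiI]]] [psi_lin [J [iJ fJ psiJ]]]; split.
  exact/tsubspace_ker/tens_lin_val.
exists I, J; split.
- by split; [exact: ideal_subspace | exists I].
- by split; [exact: ideal_subspace | exists J].
- by move=> a b Ia; rewrite tens_val_cons tens_val_nil phiI // mul0r addr0.
- by move=> a b Jb; rewrite tens_val_cons tens_val_nil psiJ // mulr0 addr0.
Qed.

Lemma tspan_ext (S : seq (seq (A * B)%type)) c d :
  (forall i, (i < size S)%N -> c i = d i) -> tspan S c = tspan S d.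
Proof.
move=> cd; rewrite /tspan; congr flatten; apply/eq_in_map => i.
by rewrite mem_iota add0n => /andP [_ ltiS]; rewrite cd.
Qed.

Lemma tsubspace_mul_seq1 (I : seq (A * B)%type -> Prop) (X : seq (A * B)%type) a b x y :
  tsubspace I -> tens_eq X [:: (a, b)] ->
  I [seq (x * q.1, q.2 * y) | q <- X] -> I [:: (x * a, b * y)].
Proof.
move=> [_ _ _ Ieq] /tens_eqP XE; apply: Ieq; apply/tens_eqP => l m l_lin m_lin.
rewrite (tens_val_map (fun z => x * z) (fun z => z * y)).
rewrite (XE _ _ (lfun_mull x l_lin) (lfun_mulr y m_lin)).
by rewrite !tens_val_cons !tens_val_nil.
Qed.

Section Preimage.
Variables (V : lmodType k) (emb : V -> seq (A * B)%type) (I : seq (A * B)%type -> Prop).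
Hypotheses (I_sub : tsubspace I)
  (emb_lin : forall c x y, tens_eq (emb (c *: x + y)) (tscale c (emb x) ++ emb y)).

Lemma tens_val_emb l m : lfun l -> lfun m -> forall c x y,
  tens_val l m (emb (c *: x + y)) = c * tens_val l m (emb x) + tens_val l m (emb y).
Proof.
move=> l_lin m_lin c x y; have /tens_eqP -> // := emb_lin c x y.
by rewrite tens_val_cat tens_val_scale.
Qed.

Lemma tsubspace_preimage : subspace (fun x => I (emb x)).
Proof.
have [I0 ID IZ Ieq] := I_sub; split => [|c x y Ix Iy].
  apply: Ieq I0; apply/tens_eqP => l m l_lin m_lin.
  have := tens_val_emb l_lin m_lin 1 0 0; rewrite scale1r addr0 mul1r tens_val_nil => E.
  by apply: (addrI (tens_val l m (emb 0))); rewrite addr0 -E.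
by apply: Ieq (ID _ _ (IZ c _ Ix) Iy); exact: tens_eq_sym.
Qed.

Lemma tfincodim_preimage : tfincodim I -> fincodim (fun x => I (emb x)).
Proof.
have [I0 ID IZ Ieq] := I_sub; move=> [S HS].
pose R x c := I (tsub (emb x) (tspan S c)).
have [//|a x y c d Rx Ry|x c d Rx cd|s Hs] :=
  @fincodim_ker k V (size S) (fun _ => True) R _ (fincodimT V) (fun x => HS (emb x)).
- apply: Ieq (ID _ _ (IZ a _ Rx) Ry); apply/tens_eqP => l m l_lin m_lin.
  rewrite tens_val_cat tens_val_scale // !tens_val_tsub // !tens_val_tspan // tens_val_emb //.
  rewrite [in RHS](eq_bigr (fun i : 'I_(size S) => a * (c i * tens_val l m (nth [::] S i)) +
                             d i * tens_val l m (nth [::] S i))) => [|i _]; last by ring.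
  by rewrite big_split /= -mulr_sumr; ring.
- by rewrite /R -(tspan_ext cd).
exists s => x; have [c [_ Rx]] := Hs x; exists c; move: Rx; rewrite /R.
set z := emb _ => Rz; apply: Ieq Rz; apply/tens_eqP => l m l_lin m_lin.
rewrite tens_val_tsub // tens_val_tspan // big1 => [|i _]; first by rewrite subr0.
exact: mul0r.
Qed.

End Preimage.

End AlgebraTensors.

Section TwistedTensor.
Variables (k : fieldType) (A B : algType k) (t : B -> A -> seq (A * B)%type).

Lemma mtau_seq1 x y : mtau t [:: x] [:: y] = [seq (x.1 * q.1, q.2 * y.2) | q <- t x.2 y.1].
Proof. by rewrite /mtau /= !cats0. Qed.

Lemma tform_mtau (F : A -> B -> k) X Y :
  tform F (mtau t X Y) =
  \sum_(x <- X) \sum_(y <- Y) \sum_(q <- t x.2 y.1) F (x.1 * q.1) (q.2 * y.2).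
Proof.
rewrite /tform /mtau big_flatten /= big_map; apply: eq_bigr => x _.
by rewrite big_flatten /= big_map; apply: eq_bigr => y _; rewrite big_map.
Qed.

Lemma tform_mtau_l (F : A -> B -> k) X Y :
  tform F (mtau t X Y) = \sum_(x <- X) tform F (mtau t [:: x] Y).
Proof. by rewrite tform_mtau; apply: eq_bigr => x _; rewrite tform_mtau big_seq1. Qed.

Lemma tform_mtau_r (F : A -> B -> k) x Y :
  tform F (mtau t [:: x] Y) = \sum_(y <- Y) tform F (mtau t [:: x] [:: y]).
Proof.
by rewrite tform_mtau big_seq1; apply: eq_bigr => y _; rewrite tform_mtau !big_seq1.
Qed.

Hypothesis t_twisting : twisting_map t.

Lemma twist_1l a : tens_eq (t 1 a) [:: (a, 1)].
Proof.
have [_ _ + _] := t_twisting; move/(_ [:: (a, 1)]); rewrite mtau_seq1.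
by rewrite (eq_map (g := id)) ?map_id // => -[x y] /=; rewrite mul1r mulr1.
Qed.

Lemma twist_1r b : tens_eq (t b 1) [:: (1, b)].
Proof.
have [_ _ _ +] := t_twisting; move/(_ [:: (1, b)]); rewrite mtau_seq1.
by rewrite (eq_map (g := id)) ?map_id // => -[x y] /=; rewrite mul1r mulr1.
Qed.

End TwistedTensor.

Section DualForms.
Variables (k : fieldType) (A B : algType k).
Local Notation CA := (A -> k^o).
Local Notation CB := (B -> k^o).
Implicit Types (u : (CA * CB)%type) (Z : seq (CA * CB)%type) (X : seq (A * B)%type).

Definition pair_val u (x : A * B) : k := u.1 x.1 * u.2 x.2.

Lemma in_CD_seq1 u : finite_dual u.1 -> finite_dual u.2 -> in_CD [:: u].
Proof. by move=> u1_fd u2_fd z [<- | []]. Qed.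

Lemma in_CD_seq1_lfun u : in_CD [:: u] -> lfun u.1 /\ lfun u.2.
Proof. by move=> /(_ u (or_introl erefl)) [[u1_lin _] [u2_lin _]]. Qed.

Lemma tform_cd Z X : tform (cd_form Z) X = \sum_(z <- Z) tens_val z.1 z.2 X.
Proof. by rewrite /tform /cd_form /tens_val exchange_big. Qed.

Lemma tform_cd_seq1 u X : tform (cd_form [:: u]) X = tens_val u.1 u.2 X.
Proof. by rewrite tform_cd big_seq1. Qed.

Lemma tform_cd_eq Z X X' : in_CD Z -> tens_eq X X' -> tform (cd_form Z) X = tform (cd_form Z) X'.
Proof.
move=> Z_CD /tens_eqP XX'; rewrite !tform_cd; apply: eq_big_In => z Zz.
by have [[z1_lin _] [z2_lin _]] := Z_CD z Zz; apply: XX'.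
Qed.

Lemma cd_form_bilin Z : in_CD Z -> bilin (cd_form Z).
Proof.
move=> Z_CD; split=> [b c x y | a c x y]; rewrite /cd_form big_distrr -big_split;
  apply: eq_big_In => z Zz; have [[z1_lin _] [z2_lin _]] := Z_CD z Zz.
- by rewrite /= z1_lin mulrDl mulrA.
- by rewrite /= z2_lin mulrDr !mulrA [c * _]mulrC.
Qed.

End DualForms.

(** * The dual of the twisted tensor product *)

Section FiniteDualOfTwisted.
Variables (k : fieldType) (A B : algType k) (t : B -> A -> seq (A * B)%type).
Local Notation CA := (A -> k^o).
Local Notation CB := (B -> k^o).
Local Notation nth0 w i := (nth (0, 0) w i).

Definition tau_dual_spec (phi : CA) (psi : CB) (s : seq (CB * CA)%type) : Prop :=
  (forall r, List.In r s -> finite_dual r.1 /\ finite_dual r.2) /\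
  forall b a, \sum_(r <- s) r.1 b * r.2 a = tens_val phi psi (t b a).

Definition tau_dual (phi : CA) (psi : CB) : seq (CB * CA)%type :=
  epsilon (inhabits [::]) (tau_dual_spec phi psi).

Hypotheses (t_twisting : twisting_map t) (t_cont : tau_continuous t).
Local Notation Delta := (cotw_comul tau_dual).
Implicit Types (Z : seq (CA * CB)%type) (U V X Y : seq (A * B)%type).

(* Continuity of [tau] makes [(b, a) |-> <phi (x) psi, tau (b (x) a)>] vanish on
   cofinite ideals of [B] and [A]. *)
Lemma tau_dualP phi psi : finite_dual phi -> finite_dual psi ->
  tau_dual_spec phi psi (tau_dual phi psi).
Proof.
move=> phi_fd psi_fd; apply: epsilon_spec.
have [_ [B0 [A0 [[_ [IB [iIB fIB IB0]]] [_ [IA [iIA fIA IA0]]] B0_ker A0_ker]]]] :=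
  t_cont (tbang_open_tens_val_ker phi_fd psi_fd).
have [[t_linl t_linr] _ _ _] := t_twisting.
have [[phi_lin _] [psi_lin _]] := (phi_fd, psi_fd).
have [a c b b'|b c a a'|b IBb a|a IAa b|s [s_fd sE]] :=
  finite_dual_bilin_decomp (G := fun b a => tens_val phi psi (t b a)) iIB fIB iIA fIA.
- have /tens_eqP -> // := t_linl c b b' a.
  by rewrite tens_val_cat tens_val_scale.
- have /tens_eqP -> // := t_linr c b a a'.
  by rewrite tens_val_cat tens_val_scale.
- by have := B0_ker b a (IB0 _ IBb); rewrite /tau_ext /= cats0.
- by have := A0_ker b a (IA0 _ IAa); rewrite /tau_ext /= cats0.
by exists s; split => // b a; rewrite sE.
Qed.

Lemma is_dual_of_tau_dual : is_dual_of t tau_dual.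
Proof. by move=> phi psi phi_fd psi_fd b a; case: (tau_dualP phi_fd psi_fd). Qed.

Lemma cotw_comul_In Z w : in_CD Z -> List.In w (Delta Z) ->
  exists u v, [/\ w = [:: u; v], in_CD [:: u] & in_CD [:: v]].
Proof.
move=> Z_CD /In_flatten_map [z Zz /In_flatten_map [p zp /In_flatten_map [q zq]]].
move=> /List.in_map_iff [r [<- pqr]].
have [z1_fd z2_fd] := Z_CD z Zz.
have [[p_fd _] [q_fd _]] := (fd_comul_spec z1_fd, fd_comul_spec z2_fd).
have [p1_fd p2_fd] := p_fd p zp; have [q1_fd q2_fd] := q_fd q zq.
have [r_fd _] := tau_dualP p2_fd q1_fd; have [r1_fd r2_fd] := r_fd r pqr.
by exists (p.1, r.1), (r.2, q.2); split => //; apply: in_CD_seq1.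
Qed.

Lemma cotw_comul_pair_val Z u v : in_CD Z ->
  \sum_(w <- Delta Z) pair_val (nth0 w 0) u * pair_val (nth0 w 1) v =
  tform (cd_form Z) (mtau t [:: u] [:: v]).
Proof.
move: u v => [a b] [a' b'] Z_CD; rewrite tform_mtau !big_seq1 /cd_form /=.
rewrite /cotw_comul big_flatten /= big_map exchange_big /=.
apply: eq_big_In => z Zz; have [z1_fd z2_fd] := Z_CD z Zz.
have [p_fd pE] := fd_comul_spec z1_fd; have [q_fd qE] := fd_comul_spec z2_fd.
rewrite big_flatten /= big_map.
under [RHS]eq_bigr => s _ do rewrite -pE -qE big_distrl /=.
rewrite exchange_big /=; apply: eq_big_In => p zp.
rewrite big_flatten /= big_map.
under [RHS]eq_bigr => s _ do rewrite big_distrr /=.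
rewrite exchange_big /=; apply: eq_big_In => q zq.
have [[_ p2_fd] [q1_fd _]] := (p_fd p zp, q_fd q zq).
have [_ rE] := tau_dualP p2_fd q1_fd.
rewrite big_map (eq_bigr (fun r => p.1 a * q.2 b' * (r.1 b * r.2 a'))) => [|r _]; last first.
  by rewrite /pair_val /=; ring.
by rewrite -big_distrr /= rE /tens_val big_distrr /=; apply: eq_bigr => s _; ring.
Qed.

Lemma tform_cd_mtau Z X Y : in_CD Z ->
  tform (cd_form Z) (mtau t X Y) =
  \sum_(w <- Delta Z) tens_val (nth0 w 0).1 (nth0 w 0).2 X * tens_val (nth0 w 1).1 (nth0 w 1).2 Y.
Proof.
move=> Z_CD.
transitivity (\sum_(w <- Delta Z) \sum_(x <- X) \sum_(y <- Y)
                pair_val (nth0 w 0) x * pair_val (nth0 w 1) y); last first.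
  by apply: eq_bigr => w _; rewrite big_distrlr.
rewrite tform_mtau_l [RHS]exchange_big; apply: eq_bigr => x _.
rewrite tform_mtau_r [RHS]exchange_big; apply: eq_bigr => y _.
by rewrite cotw_comul_pair_val.
Qed.

Lemma tau_dual_linl c phi phi' psi :
  finite_dual phi -> finite_dual phi' -> finite_dual psi ->
  tens_eq (tau_dual (c *: phi + phi') psi) (tscale c (tau_dual phi psi) ++ tau_dual phi' psi).
Proof.
move=> phi_fd phi'_fd psi_fd; apply: (tens_eq_pointwise 0 0) => b a.
have [_ E] := tau_dualP (finite_dual_lin c phi_fd phi'_fd) psi_fd.
have [[_ E1] [_ E2]] := (tau_dualP phi_fd psi_fd,
                         tau_dualP phi'_fd psi_fd).
rewrite E big_cat /= big_map (eq_bigr (fun r => c * (r.1 b * r.2 a))) => [|r _]; last first.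
  by rewrite mulrA.
rewrite -big_distrr /= E1 E2 /tens_val big_distrr -big_split /=.
by apply: eq_bigr => q _; rewrite mulrA -mulrDl.
Qed.

Lemma tau_dual_linr c phi psi psi' :
  finite_dual phi -> finite_dual psi -> finite_dual psi' ->
  tens_eq (tau_dual phi (c *: psi + psi')) (tscale c (tau_dual phi psi) ++ tau_dual phi psi').
Proof.
move=> phi_fd psi_fd psi'_fd; apply: (tens_eq_pointwise 0 0) => b a.
have [_ E] := tau_dualP phi_fd (finite_dual_lin c psi_fd psi'_fd).
have [[_ E1] [_ E2]] := (tau_dualP phi_fd psi_fd,
                         tau_dualP phi_fd psi'_fd).
rewrite E big_cat /= big_map (eq_bigr (fun r => c * (r.1 b * r.2 a))) => [|r _]; last first.
  by rewrite mulrA.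
rewrite -big_distrr /= E1 E2 /tens_val big_distrr -big_split /=.
apply: eq_bigr => q _.
change (phi q.1 * (c * psi q.2 + psi' q.2) = c * (phi q.1 * psi q.2) + phi q.1 * psi' q.2).
ring.
Qed.

Lemma cotw_comul_coassocl_val Z (pa : nat -> A) (pb : nat -> B) : in_CD Z ->
  tensn_val (fun i (f : CA) => f (pa i)) (fun i (g : CB) => g (pb i))
    (flatten [seq [seq w ++ behead x | w <- Delta (take 1 x)] | x <- Delta Z]) =
  tform (cd_form Z)
    (mtau t (mtau t [:: (pa 0%N, pb 0%N)] [:: (pa 1%N, pb 1%N)]) [:: (pa 2%N, pb 2%N)]).
Proof.
move=> Z_CD; rewrite /tensn_val big_flatten /= big_map tform_mtau_l.
transitivity (\sum_(x <- Delta Z)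
  tens_val (nth0 x 0).1 (nth0 x 0).2 (mtau t [:: (pa 0%N, pb 0%N)] [:: (pa 1%N, pb 1%N)]) *
  pair_val (nth0 x 1) (pa 2%N, pb 2%N)).
  apply: eq_big_In => x Zx; have [u [v [-> u_CD _]]] := cotw_comul_In Z_CD Zx.
  rewrite /= -tform_cd_seq1 -cotw_comul_pair_val // big_map big_distrl /=.
  apply: eq_big_In => w uw; have [u' [v' [-> _ _]]] := cotw_comul_In u_CD uw.
  by rewrite /= !big_cons big_nil /pair_val /=; ring.
under eq_bigr => x _ do rewrite /tens_val big_distrl /=.
by rewrite exchange_big /=; apply: eq_bigr => u _; rewrite -cotw_comul_pair_val.
Qed.

Lemma cotw_comul_coassocr_val Z (pa : nat -> A) (pb : nat -> B) : in_CD Z ->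
  tensn_val (fun i (f : CA) => f (pa i)) (fun i (g : CB) => g (pb i))
    (flatten [seq [seq take 1 x ++ w | w <- Delta (behead x)] | x <- Delta Z]) =
  tform (cd_form Z)
    (mtau t [:: (pa 0%N, pb 0%N)] (mtau t [:: (pa 1%N, pb 1%N)] [:: (pa 2%N, pb 2%N)])).
Proof.
move=> Z_CD; rewrite /tensn_val big_flatten /= big_map tform_mtau_r.
transitivity (\sum_(x <- Delta Z) pair_val (nth0 x 0) (pa 0%N, pb 0%N) *
  tens_val (nth0 x 1).1 (nth0 x 1).2 (mtau t [:: (pa 1%N, pb 1%N)] [:: (pa 2%N, pb 2%N)])).
  apply: eq_big_In => x Zx; have [u [v [-> _ v_CD]]] := cotw_comul_In Z_CD Zx.
  rewrite /= -tform_cd_seq1 -cotw_comul_pair_val // big_map big_distrr /=.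
  apply: eq_big_In => w vw; have [u' [v' [-> _ _]]] := cotw_comul_In v_CD vw.
  by rewrite /= !big_cons big_nil /pair_val /=; ring.
under eq_bigr => x _ do rewrite /tens_val big_distrr /=.
by rewrite exchange_big /=; apply: eq_bigr => u _; rewrite -cotw_comul_pair_val.
Qed.

Lemma cotw_comul2_size Z : in_CD Z ->
  all (fun x => size x == 3)
      (flatten [seq [seq w ++ behead x | w <- Delta (take 1 x)] | x <- Delta Z]) /\
  all (fun x => size x == 3)
      (flatten [seq [seq take 1 x ++ w | w <- Delta (behead x)] | x <- Delta Z]).
Proof.
move=> Z_CD; split; apply/List.forallb_forall => y /In_flatten_map [x Zx /List.in_map_iff [w [<-]]].
- have [u [v [-> u_CD _]]] := cotw_comul_In Z_CD Zx.
  by move=> /(cotw_comul_In u_CD) [u' [v' [-> _ _]]].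
- have [u [v [-> _ v_CD]]] := cotw_comul_In Z_CD Zx.
  by move=> /(cotw_comul_In v_CD) [u' [v' [-> _ _]]].
Qed.

Lemma cotw_comul_coassoc Z : in_CD Z ->
  tensn_eq (flatten [seq [seq w ++ behead x | w <- Delta (take 1 x)] | x <- Delta Z])
           (flatten [seq [seq take 1 x ++ w | w <- Delta (behead x)] | x <- Delta Z]).
Proof.
move=> Z_CD; have [size_l size_r] := cotw_comul2_size Z_CD.
apply: (tensn_inj 0 0 (n := 3)) => // pa pb.
rewrite cotw_comul_coassocl_val // cotw_comul_coassocr_val //.
by have [_ t_assoc _ _] := t_twisting; apply: tform_cd_eq.
Qed.

Lemma cotw_comul_counit Z : in_CD Z ->
  tens_eq [seq (cd_counit (nth0 w 0) *: (nth0 w 1).1, (nth0 w 1).2) | w <- Delta Z] Z /\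
  tens_eq [seq (cd_counit (nth0 w 1) *: (nth0 w 0).1, (nth0 w 0).2) | w <- Delta Z] Z.
Proof.
move=> Z_CD; have [_ _ t_unitl t_unitr] := t_twisting.
split; apply: (tens_eq_pointwise 0 0) => a b; rewrite big_map /=.
- transitivity (\sum_(w <- Delta Z) pair_val (nth0 w 0) (1, 1) * pair_val (nth0 w 1) (a, b)).
    by apply: eq_bigr => w _; rewrite /pair_val /cd_counit /= scaler_fctE; ring.
  by rewrite cotw_comul_pair_val // (tform_cd_eq Z_CD (t_unitl _)) /tform big_seq1.
- transitivity (\sum_(w <- Delta Z) pair_val (nth0 w 0) (a, b) * pair_val (nth0 w 1) (1, 1)).
    by apply: eq_bigr => w _; rewrite /pair_val /cd_counit /= scaler_fctE; ring.
  by rewrite cotw_comul_pair_val // (tform_cd_eq Z_CD (t_unitr _)) /tform big_seq1.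
Qed.

Lemma cotwisting_map_tau_dual : cotwisting_map tau_dual.
Proof.
split=> [phi psi phi_fd psi_fd | c phi phi' psi | c phi psi psi' | Z | Z].
- by case: (tau_dualP phi_fd psi_fd).
- exact: tau_dual_linl.
- exact: tau_dual_linr.
- exact: cotw_comul_coassoc.
- exact: cotw_comul_counit.
Qed.

Lemma tform_cd_mtau_eql Z U U' V : in_CD Z -> tens_eq U U' ->
  tform (cd_form Z) (mtau t U V) = tform (cd_form Z) (mtau t U' V).
Proof.
move=> Z_CD /tens_eqP UU'; rewrite !tform_cd_mtau //; apply: eq_big_In => w Zw.
have [u [v [-> u_CD _]]] := cotw_comul_In Z_CD Zw.
by have [[u1_lin _] [u2_lin _]] := u_CD u (or_introl erefl); rewrite /= UU'.
Qed.

Lemma tform_cd_mtau_mid Z U X V : in_CD Z ->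
  tform (cd_form Z) (mtau t (mtau t U X) V) =
  \sum_(w <- Delta Z) \sum_(w' <- Delta [:: nth0 w 0])
    tens_val (nth0 w 1).1 (nth0 w 1).2 V * tens_val (nth0 w' 0).1 (nth0 w' 0).2 U *
    tens_val (nth0 w' 1).1 (nth0 w' 1).2 X.
Proof.
move=> Z_CD; rewrite tform_cd_mtau //; apply: eq_big_In => w Zw.
have [u [v [-> u_CD _]]] := cotw_comul_In Z_CD Zw.
rewrite /= -tform_cd_seq1 tform_cd_mtau // big_distrl /=.
by apply: eq_bigr => w' _; ring.
Qed.

Lemma cotw_comul2_In Z w w' : in_CD Z -> List.In w (Delta Z) ->
  List.In w' (Delta [:: nth0 w 0]) -> in_CD [:: nth0 w' 0] /\ in_CD [:: nth0 w' 1].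
Proof.
move=> Z_CD Zw; have [u [v [-> u_CD _]]] := cotw_comul_In Z_CD Zw.
by move=> /(cotw_comul_In u_CD) [u' [v' [-> ? ?]]].
Qed.

(* The largest [m_tau]-ideal on which the form of [Z] vanishes. *)
Definition cd_ideal Z X := forall U V, tform (cd_form Z) (mtau t (mtau t U X) V) = 0.

Definition cd_ideal_forms Z : seq (CA * CB)%type :=
  flatten [seq [seq nth0 w' 1 | w' <- Delta [:: nth0 w 0]] | w <- Delta Z].

Lemma tens_lin_tform_cd_mtau_mid Z U V : in_CD Z ->
  tens_lin (fun X => tform (cd_form Z) (mtau t (mtau t U X) V)).
Proof.
move=> Z_CD; rewrite (funext (fun X => tform_cd_mtau_mid U X V Z_CD)).
apply: tens_lin_sum => w Zw; apply: tens_lin_sum => w' uw'; apply: tens_linZ.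
by have [_ /in_CD_seq1_lfun [l1 l2]] := cotw_comul2_In Z_CD Zw uw'; apply: tens_lin_val.
Qed.

Lemma cd_ideal_tideal Z : in_CD Z -> tideal t (cd_ideal Z).
Proof.
move=> Z_CD; have [_ t_assoc _ _] := t_twisting; split.
  apply: tsubspace_bigcap => U; apply: tsubspace_bigcap => V.
  exact/tsubspace_ker/tens_lin_tform_cd_mtau_mid.
move=> X Y IY; split => U V.
  by rewrite (tform_cd_mtau_eql _ Z_CD (tens_eq_sym (t_assoc U X Y))).
rewrite (tform_cd_mtau_eql _ Z_CD (tens_eq_sym (t_assoc U Y X))).
by rewrite (tform_cd_eq Z_CD (t_assoc _ X V)).
Qed.

Lemma cd_ideal_tfincodim Z : in_CD Z -> tfincodim (cd_ideal Z).
Proof.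
move=> Z_CD; have [|S HS] := @tens_val_ker_fincodim _ _ _ (cd_ideal_forms Z).
  move=> e /In_flatten_map [w Zw /List.in_map_iff [w' [<- uw']]].
  by have [_ /in_CD_seq1_lfun] := cotw_comul2_In Z_CD Zw uw'.
exists S => X; have [c Hc] := HS X; exists c => U V.
rewrite tform_cd_mtau_mid // big1_In // => w Zw; rewrite big1_In // => w' uw'.
rewrite Hc ?mulr0 //; apply/In_flatten_map; exists w => //.
by apply/List.in_map_iff; exists w'.
Qed.

Lemma cd_ideal_tform Z X : in_CD Z -> cd_ideal Z X -> tform (cd_form Z) X = 0.
Proof.
move=> Z_CD /(_ [:: (1, 1)] [:: (1, 1)]); have [_ _ t_unitl t_unitr] := t_twisting.
by rewrite (tform_cd_mtau_eql _ Z_CD (t_unitl X)) (tform_cd_eq Z_CD (t_unitr X)).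
Qed.

Lemma twisted_finite_dual_cd_form Z : in_CD Z -> twisted_finite_dual t (cd_form Z).
Proof.
move=> Z_CD; split; first exact: cd_form_bilin.
exists (cd_ideal Z); split; [exact: cd_ideal_tideal | exact: cd_ideal_tfincodim |].
by move=> X; apply: cd_ideal_tform.
Qed.

Lemma tideal_restrictl I : tideal t I -> ideal (fun a => I [:: (a, 1)]).
Proof.
move=> [I_sub I_mul]; split; first exact: tsubspace_preimage (tens_eq_seq1_linl 1).
move=> a x Ix; have [Iax Ixa] := I_mul [:: (a, 1)] _ Ix; split.
- move: Iax; rewrite mtau_seq1 => /(tsubspace_mul_seq1 I_sub (twist_1l t_twisting x)).
  by rewrite mulr1.
- move: Ixa; rewrite mtau_seq1 => /(tsubspace_mul_seq1 I_sub (twist_1l t_twisting a)).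
  by rewrite mulr1.
Qed.

Lemma tideal_restrictr I : tideal t I -> ideal (fun b => I [:: (1, b)]).
Proof.
move=> [I_sub I_mul]; split; first exact: tsubspace_preimage (tens_eq_seq1_linr 1).
move=> b y Iy; have [Iby Iyb] := I_mul [:: (1, b)] _ Iy; split.
- move: Iby; rewrite mtau_seq1 => /(tsubspace_mul_seq1 I_sub (twist_1r t_twisting b)).
  by rewrite mulr1.
- move: Iyb; rewrite mtau_seq1 => /(tsubspace_mul_seq1 I_sub (twist_1r t_twisting y)).
  by rewrite mulr1.
Qed.

Lemma twisted_finite_dual_cd_rep F : twisted_finite_dual t F -> exists Z, cd_rep F Z.
Proof.
move=> [[F_linl F_linr] [I [I_ideal I_fin FI]]]; have [I_sub I_mul] := I_ideal.
have F_vanish a b : I (mtau t [:: (a, 1)] [:: (1, b)]) -> F a b = 0.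
  rewrite mtau_seq1 => /(tsubspace_mul_seq1 I_sub (twist_1l t_twisting 1)).
  by rewrite mulr1 mul1r => /FI; rewrite /tform big_seq1.
have [a Ia b|b Ib a|Z [Z_CD ZE]] := finite_dual_bilin_decomp (G := F)
  (tideal_restrictl I_ideal) (tfincodim_preimage I_sub (tens_eq_seq1_linl 1) I_fin)
  (tideal_restrictr I_ideal) (tfincodim_preimage I_sub (tens_eq_seq1_linr 1) I_fin)
  F_linl F_linr.
- by apply: F_vanish; exact: (I_mul [:: (1, b)] _ Ia).2.
- by apply: F_vanish; exact: (I_mul [:: (a, 1)] _ Ib).1.
by exists Z; split => // a b; rewrite ZE.
Qed.

Lemma cotw_comul_cd_rep F Z
    (s : seq (((A -> B -> k^o) * (A -> B -> k^o)) * (seq (CA * CB) * seq (CA * CB)))%type) :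
  cd_rep F Z -> twisted_comul_rep t F (map fst s) ->
  (forall j, List.In j s -> cd_rep j.1.1 j.2.1 /\ cd_rep j.1.2 j.2.2) ->
  tensn_eq (flatten [seq [seq [:: x; y] | x <- j.2.1, y <- j.2.2] | j <- s]) (Delta Z).
Proof.
move=> [Z_CD ZE] [_ sE] s_rep; apply: (tensn_inj 0 0 (n := 2)).
- apply/List.forallb_forall => x /In_flatten_map [j _ /In_flatten_map [x0 _]].
  by move=> /List.in_map_iff [y0 [<- _]].
- apply/List.forallb_forall => x Zx.
  by have [u [v [-> _ _]]] := cotw_comul_In Z_CD Zx.
move=> pa pb.
transitivity (tform (cd_form Z) (mtau t [:: (pa 0%N, pb 0%N)] [:: (pa 1%N, pb 1%N)])).
  rewrite /tform; under [in RHS]eq_bigr => x _ do rewrite ZE.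
  rewrite -/(tform F _) -sE big_map /tensn_val big_flatten /= big_map.
  apply: eq_big_In => j sj; have [[_ E1] [_ E2]] := s_rep j sj.
  rewrite /tform !big_seq1 /= -E1 -E2 /cd_form big_flatten /= big_map big_distrl /=.
  apply: eq_bigr => x _; rewrite big_map big_distrr /=; apply: eq_bigr => y _.
  by rewrite !big_cons big_nil mulr1.
rewrite -cotw_comul_pair_val // /tensn_val; apply: eq_big_In => w Zw.
have [u [v [-> _ _]]] := cotw_comul_In Z_CD Zw.
by rewrite /= !big_cons big_nil mulr1.
Qed.

Lemma dual_id_coalg_iso_tau_dual : dual_id_coalg_iso t tau_dual.
Proof.
split=> [F | Z | Z Z' _ _ ZZ' | F Z s _ | F Z _ [_ <-]].
- exact: twisted_finite_dual_cd_rep.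
- exact: twisted_finite_dual_cd_form.
- exact: tens_eq_pointwise 0 0 _ _ ZZ'.
- exact: cotw_comul_cd_rep.
- by rewrite /cd_form /cd_counit.
Qed.

End FiniteDualOfTwisted.

Theorem theorem3p6 (k : fieldType) (A B : algType k)
    (t : B -> A -> seq (A * B)%type) :
  twisting_map t -> tau_continuous t ->
  exists tauo : (A -> k^o) -> (B -> k^o) -> seq ((B -> k^o) * (A -> k^o))%type,
    [/\ is_dual_of t tauo, cotwisting_map tauo & dual_id_coalg_iso t tauo].
Proof.
move=> t_twisting t_cont; exists (tau_dual t); split.
- exact: is_dual_of_tau_dual.
- exact: cotwisting_map_tau_dual.
- exact: dual_id_coalg_iso_tau_dual.
Qed.
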